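(* Let $A=\{a_1,\dots,a_{3k}\}$ be an instance of 3-PARTITION with $a^2$ divisible by $7$, and let $G(A)$ be the bipartite network constructed from $A$ as described in the context. In any division of $G(A)$ with maximal bipartite modularity, none of the bicliques $K_1,\dots,K_k$ is divided (i.e., for each $t$, all vertices of $K_t$ lie in a single community).
   Context: An instance of 3-PARTITION is a set of $3k$ positive integers $A=\{a_1,\dots,a_{3k}\}$ such that $a=\sum_{i=1}^{3k}a_i=kb$ and $b/4<a_i<b/2$ for all $i$, for some integer $b$. The bipartite network $G(A)$ (vertices colored red/blue, every edge joining a red and a blue vertex) is built as follows. (1) Construct $k$ complete bipartite networks (bicliques) $K_1,\dots,K_k$, each with $a$ red and $a$ blue vertices. (2) For each $i=1,\dots,3k$ add a red vertex $x_i$ and a blue vertex $y_i$ (element vertices). (3) For each $i$, connect $x_i$ to $a_i$ blue vertices in each of the $k$ bicliques, in such a way that each blue vertex of every biclique is adjacent to exactly one red element vertex; similarly connect $y_i$ to $a_i$ red vertices in each biclique so that each red vertex of every biclique is adjacent to exactly one blue element vertex. (4) For each $i$, add the edge $x_iy_i$. (5) For each $i$, construct a star $X_i$ with one blue internal vertex and $a^2/7$ red leaves, and a star $Y_i$ with one red internal vertex and $a^2/7$ blue leaves. (6) For each $i$, connect $x_i$ to the internal vertex of $X_i$ and $y_i$ to the internal vertex of $Y_i$. A division of the vertex set is a partition into communities. With $m$ the number of edges, Barber's bipartite modularity is $Q_b(\mathcal{C})=\sum_{C\in\mathcal{C}}\left(\frac{m_C}{m}-\frac{R_CB_C}{m^2}\right)$,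 where $m_C$ is the number of edges inside $C$ and $R_C$ (resp. $B_C$) is the sum of degrees of red (resp. blue) vertices in $C$. A division with maximal bipartite modularity is one maximizing $Q_b$ over all divisions. *)

From HB Require Import structures.
From mathcomp Require Import all_boot all_order all_algebra.
Set Implicit Arguments. Unset Strict Implicit. Unset Printing Implicit Defensive.
Import Order.TTheory GRing.Theory Num.Theory.

(* 3-PARTITION instance: k, and the 3k integers a_i given as w : 'I_(3k) -> nat. *)
Definition three_partition (k : nat) (w : 'I_(3 * k) -> nat) : Prop :=
  exists b : nat, (\sum_(i < 3 * k) w i = k * b)%N /\
    forall i, (0 < w i)%N /\ (b < 4 * w i)%N /\ (2 * w i < b)%N.

Section Network.
Variable k : nat.
Variable w : 'I_(3 * k) -> nat.

Definition tot : nat := \sum_(i < 3 * k) w i.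
(* number of leaves of each star, a^2/7 *)
Definition nleaves : nat := (tot ^ 2) %/ 7.

(* Red vertices:  biclique red vertices (t, j) | element vertices x_i
                | internal vertices of the stars Y_i | leaves (i, l) of the stars X_i *)
Definition redV : finType :=
  ((('I_k * 'I_tot) + 'I_(3 * k)) + ('I_(3 * k) + ('I_(3 * k) * 'I_nleaves)))%type.
(* Blue vertices: biclique blue vertices (t, j) | element vertices y_i
                | internal vertices of the stars X_i | leaves (i, l) of the stars Y_i *)
Definition blueV : finType :=
  ((('I_k * 'I_tot) + 'I_(3 * k)) + ('I_(3 * k) + ('I_(3 * k) * 'I_nleaves)))%type.

Definition vertex : finType := (redV + blueV)%type.

(* f t j = the index i of the red element vertex x_i adjacent to blue vertex j of K_t;
   g t j = the index i of the blue element vertex y_i adjacent to red vertex j of K_t. *)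
Definition valid_assign (f : 'I_k -> 'I_tot -> 'I_(3 * k)) : Prop :=
  forall (t : 'I_k) (i : 'I_(3 * k)), #|[set j | f t j == i]| = w i.

Variables f g : 'I_k -> 'I_tot -> 'I_(3 * k).

Definition gedge (r : redV) (b : blueV) : bool :=
  match r, b with
  | inl (inl (t, _)), inl (inl (t', _)) => t == t'          (* biclique K_t *)
  | inl (inr i), inl (inl (t, j)) => f t j == i             (* x_i -- blue of K_t *)
  | inl (inl (t, j)), inl (inr i) => g t j == i             (* red of K_t -- y_i *)
  | inl (inr i), inl (inr i') => i == i'                    (* x_i -- y_i *)
  | inl (inr i), inr (inl i') => i == i'                    (* x_i -- centre of X_i *)
  | inr (inr (i, _)), inr (inl i') => i == i'               (* leaf of X_i -- centre *)
  | inr (inl i), inl (inr i') => i == i'                    (* centre of Y_i -- y_i *)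
  | inr (inl i), inr (inr (i', _)) => i == i'               (* centre of Y_i -- leaf *)
  | _, _ => false
  end.

Definition deg_red (r : redV) : nat := #|[set b | gedge r b]|.
Definition deg_blue (b : blueV) : nat := #|[set r | gedge r b]|.

Definition nedges : nat := \sum_(r : redV) \sum_(b : blueV) gedge r b.

Definition edges_in (C : {set vertex}) : nat :=
  \sum_(r : redV) \sum_(b : blueV) [&& inl r \in C, inr b \in C & gedge r b].
Definition red_deg_sum (C : {set vertex}) : nat := \sum_(r : redV | inl r \in C) deg_red r.
Definition blue_deg_sum (C : {set vertex}) : nat := \sum_(b : blueV | inr b \in C) deg_blue b.

Definition Qb (P : {set {set vertex}}) : rat :=
  \sum_(C in P) (((edges_in C)%:R / (nedges)%:R)
                 - ((red_deg_sum C * blue_deg_sum C)%:R / (nedges ^ 2)%:R))%R.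

Definition biclique (t : 'I_k) : {set vertex} :=
  [set v : vertex | match v with
                    | inl (inl (inl (t', _))) => t' == t
                    | inr (inl (inl (t', _))) => t' == t
                    | _ => false end].

End Network.

From HB Require Import structures.
From mathcomp Require Import all_boot all_order all_algebra.
From mathcomp Require Import ring lra zify.
Import Order.TTheory GRing.Theory Num.Theory.
Set Implicit Arguments. Unset Strict Implicit. Unset Printing Implicit Defensive.

(* Fix a biclique [K_t] of [a] red and [a] blue vertices and an optimal division [P].  For
   its [i]-th red and [j]-th blue vertex, let [P_ij] be [P] with all of [K_t] moved into
   the common block of these two vertices if they share one, and into a new block
   otherwise.  Writing [Qb] as a quadratic form in the co-membership indicators, the
   total gain [m^2 * sum_(i,j) (Qb P_ij - Qb P)] is at least [a E ((a-3) m - a (a+1)^2)],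
   where [E] is the number of pairs [(i, j)] separated by [P]: each separated pair gains
   [a^2 (m - (a+1)^2)] inside [K_t], and the loss along the [2a] edges leaving [K_t] is
   controlled by [sum_X rho X beta X (3a - rho X - beta X) <= a^3] for the numbers
   [rho X], [beta X] of red and blue vertices of [K_t] in block [X].  The stars make
   [7 m = k (13 a^2 + 14 a + 63)], so this is positive as soon as [E > 0], contradicting
   optimality; hence [E = 0] and [K_t] lies in a single block. *)

Lemma big_pairE (R : Type) (idx : R) (op : Monoid.com_law idx) (A B : finType)
    (F : A * B -> R) :
  \big[op/idx]_p F p = \big[op/idx]_a \big[op/idx]_b F (a, b).
Proof. by rewrite pair_bigA; apply: eq_bigr => -[]. Qed.

Lemma card_set_sum (T : finType) (p : pred T) : #|[set x | p x]| = \sum_x p x.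
Proof. by rewrite -sum1dep_card big_mkcond; apply: eq_bigr => x _; case: (p x). Qed.

Lemma sum_eq_indicator (T : finType) (x : T) : \sum_y (x == y : nat) = 1.
Proof. by rewrite (bigD1 x) //= eqxx big1 // => y /negbTE; rewrite eq_sym => ->. Qed.

Section Degrees.
Variables (k : nat) (w : 'I_(3 * k) -> nat) (f g : 'I_k -> 'I_(tot w) -> 'I_(3 * k)).
Local Notation gedge := (gedge f g).
Local Notation deg_red := (deg_red f g).
Local Notation deg_blue := (deg_blue f g).

Lemma deg_redE r : deg_red r = \sum_b gedge r b.
Proof. exact: card_set_sum. Qed.

Lemma deg_red_biclique t j : deg_red (inl (inl (t, j))) = (tot w).+1.
Proof.
rewrite deg_redE big_sumType big_sumType /= big_pairE /=.
rewrite (bigD1 t) //= eqxx sum_nat_const card_ord muln1 big1; last first.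
  by move=> t' /negbTE; rewrite eq_sym => ->; rewrite big1.
by rewrite sum_eq_indicator big_sumType !big1 //=; lia.
Qed.

Lemma deg_blue_biclique t j : deg_blue (inl (inl (t, j))) = (tot w).+1.
Proof.
rewrite /deg_blue card_set_sum big_sumType big_sumType /= big_pairE /=.
rewrite (bigD1 t) //= eqxx sum_nat_const card_ord muln1 big1; last first.
  by move=> t' /negbTE ->; rewrite big1.
by rewrite big_sumType /= sum_eq_indicator big1 // big1 => [|[]]; first lia.
Qed.

Lemma deg_red_element i : valid_assign f -> deg_red (inl (inr i)) = k * w i + 2.
Proof.
move=> vf; rewrite deg_redE big_sumType big_sumType /= big_pairE /=.
rewrite (eq_bigr (fun _ => w i)); last by move=> t _; rewrite -(vf t i) card_set_sum.
rewrite sum_nat_const card_ord sum_eq_indicator big_sumType /= sum_eq_indicator big1 //=.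
lia.
Qed.

Lemma deg_red_Ycentre i : deg_red (inr (inl i)) = (nleaves w).+1.
Proof.
rewrite deg_redE big_sumType big_sumType /= big_pairE /= sum_eq_indicator big1;
  last by move=> *; rewrite big1.
rewrite big_sumType /= big1 // big_pairE /= (bigD1 i) //= eqxx sum_nat_const card_ord.
rewrite big1; first lia.
by move=> i' /negbTE; rewrite eq_sym => ->; rewrite big1.
Qed.

Lemma deg_red_Xleaf p : deg_red (inr (inr p)) = 1.
Proof.
case: p => i l.
by rewrite deg_redE !big_sumType /= big1 // big1 // sum_eq_indicator big1.
Qed.

Lemma nedgesE : nedges f g = \sum_r deg_red r.
Proof. by apply: eq_bigr => r _; rewrite deg_redE. Qed.

Lemma nedges_eq : valid_assign f ->
  nedges f g = k * ((tot w) ^ 2 + 2 * tot w + 9 + 6 * nleaves w).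
Proof.
move=> vf; rewrite nedgesE !big_sumType /= big_pairE.
rewrite (eq_bigr (fun _ => tot w * (tot w).+1)); last first.
  move=> t _; under eq_bigr do rewrite deg_red_biclique.
  by rewrite sum_nat_const card_ord.
under [X in _ + X + _]eq_bigr do rewrite deg_red_element //.
under [X in _ + (X + _)]eq_bigr do rewrite deg_red_Ycentre.
under [X in _ + (_ + X)]eq_bigr do rewrite deg_red_Xleaf.
rewrite big_split /= -[\sum_i k * w i]big_distrr /= !sum_nat_const card_prod !card_ord.
rewrite -/(tot w); lia.
Qed.

Lemma tot_ge7 : three_partition w -> 0 < k -> 7 %| tot w ^ 2 -> 7 <= tot w.
Proof.
move=> [b [_ hw]] k0 d7.
have i0 : 'I_(3 * k) by exists 0; rewrite muln_gt0.
have a0 : 0 < tot w by rewrite /tot (bigD1 i0) //=; have := (hw i0).1; lia.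
by apply: dvdn_leq => //; move: d7; rewrite expnS expn1 Euclid_dvdM // orbb.
Qed.

Lemma nedges_large : valid_assign f -> 0 < k -> 7 <= tot w -> 7 %| tot w ^ 2 ->
  tot w * (tot w).+1 ^ 2 < (tot w - 3) * nedges f g.
Proof.
move=> vf k0 a7 d7.
have nl : 7 * nleaves w = tot w ^ 2 by rewrite /nleaves mulnC divnK.
have m7 : 7 * nedges f g = k * (13 * tot w ^ 2 + 14 * tot w + 63).
  by rewrite nedges_eq //; nia.
rewrite -(ltn_pmul2l (isT : 0 < 7)) [X in _ < X]mulnCA m7.
apply: (@leq_trans ((tot w - 3) * (13 * tot w ^ 2 + 14 * tot w + 63))).
  have [c ->] : exists c, tot w = c + 7 by exists (tot w - 7); rewrite subnK.
  have -> : c + 7 - 3 = c + 4 by lia.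
  nia.
by rewrite leq_mul2l leq_pmull ?orbT.
Qed.

End Degrees.

Local Open Scope ring_scope.

Lemma sum_indicator_mull (R : pzSemiRingType) (T : finType) (x : T) (G : T -> R) :
  \sum_y (x == y)%:R * G y = G x.
Proof.
rewrite (bigD1 x) //= eqxx mul1r big1 ?addr0 // => y /negbTE.
by rewrite eq_sym => ->; rewrite mul0r.
Qed.

Lemma sum_mem2_partition (R : pzSemiRingType) (T : finType) (P : {set {set T}}) (x y : T) :
  partition P setT ->
  \sum_(C in P) ((x \in C) && (y \in C))%:R = (pblock P x == pblock P y)%:R :> R.
Proof.
move=> /and3P [/eqP cov triv _].
have xP : x \in cover P by rewrite cov inE.
rewrite (bigD1 (pblock P x)) ?pblock_mem //= mem_pblock xP /= big1 ?addr0.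
  by rewrite eq_pblock.
move=> C /andP [CP Cx]; case xC: (x \in C) => //=.
by rewrite (def_pblock triv CP xC) eqxx in Cx.
Qed.

Lemma pblock_preim_partition (T : finType) (rT : eqType) (l : T -> rT) (x y : T) :
  (pblock (preim_partition l setT) x == pblock (preim_partition l setT) y) = (l x == l y).
Proof.
have /and3P [/eqP cov triv _] := preim_partitionP l setT.
rewrite eq_pblock // ?cov ?inE // /preim_partition pblock_equivalence_partition ?inE //.
by move=> u v z _ _ _; split=> [//|/eqP ->]; rewrite eq_sym.
Qed.

Section CubicBound.
Variables (R : realFieldType) (I : finType) (a : R).

(* If every [p i <= a], use [p^2 (3a - p) <= 2 a^2 p]; otherwise the other [p i] lie in
   [0, q] with [q = 2a - p j], where [p^2 (3a - p) <= q (3a - q) p]. *)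
Lemma sum_sq_3sub_le_cube (p : I -> R) :
  (forall i, 0 <= p i) -> \sum_i p i = 2 * a ->
  \sum_i p i ^+ 2 * (3 * a - p i) <= 4 * a ^+ 3.
Proof.
move=> p0 sp.
have a0 : 0 <= a.
  have : 0 <= \sum_i p i by apply: sumr_ge0 => i _; apply: p0.
  rewrite sp; lra.
case: (pickP (fun _ : I => true)) => [i0 _|I0]; last first.
  by rewrite big_pred0 //; apply: mulr_ge0 => //; apply: exprn_ge0.
case: (@arg_maxP _ _ I i0 xpredT p isT) => j _ jmax.
case: (lerP (p j) a) => pja.
  have -> : 4 * a ^+ 3 = \sum_i p i * (2 * a ^+ 2) by rewrite -mulr_suml sp; ring.
  apply: ler_sum => i _; have := p0 i; have := le_trans (jmax i isT) pja.
  set u := p i => ua u0.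
  have : 0 <= u * ((a - u) * (2 * a - u)) by apply: mulr_ge0 => //; apply: mulr_ge0; lra.
  nra.
set q := 2 * a - p j.
have sq : \sum_(i | i != j) p i = q by rewrite /q -sp [X in _ = X - _](bigD1 j) //=; lra.
have piq i : i != j -> p i <= q by move=> ij; rewrite -sq (bigD1 i) //= lerDl sumr_ge0.
rewrite (bigD1 j) //=.
have hq : \sum_(i | i != j) p i ^+ 2 * (3 * a - p i) <= \sum_(i | i != j) p i * (q * (3 * a - q)).
  apply: ler_sum => i ij; have := piq i ij; have := p0 i; set u := p i => u0 uq.
  have : 0 <= u * ((q - u) * (3 * a - q - u)).
    by apply: mulr_ge0 => //; apply: mulr_ge0; rewrite /q in uq *; lra.
  nra.
rewrite -mulr_suml sq in hq.
have : p j ^+ 2 * (3 * a - p j) + q * (q * (3 * a - q)) = 4 * a ^+ 3 by rewrite /q; ring.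
lra.
Qed.

Lemma sum_mul_3sub_le_cube (x y : I -> R) :
  (forall i, 0 <= x i) -> (forall i, 0 <= y i) -> \sum_i x i = a -> \sum_i y i = a ->
  \sum_i x i * y i * (3 * a - x i - y i) <= a ^+ 3.
Proof.
move=> x0 y0 sx sy.
have sp : \sum_i (x i + y i) = 2 * a by rewrite big_split /= sx sy; ring.
have p0 i : 0 <= x i + y i by rewrite addr_ge0.
have ple i : x i + y i <= 2 * a by rewrite -sp (bigD1 i) //= lerDl sumr_ge0.
have := sum_sq_3sub_le_cube p0 sp.
suff : \sum_i x i * y i * (3 * a - x i - y i)
       <= \sum_i (x i + y i) ^+ 2 * (3 * a - (x i + y i)) / 4.
  by rewrite -mulr_suml; lra.
apply: ler_sum => i _; have := ple i; have := x0 i; have := y0 i => *.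
have : 0 <= (x i - y i) ^+ 2 * (3 * a - (x i + y i)).
  by apply: mulr_ge0; [apply: sqr_ge0 | lra].
lra.
Qed.

End CubicBound.

Section Coincidences.
Variables (R : realFieldType) (T : finType) (n : nat) (U V : 'I_n -> T).

Definition coinc (X : T) : R := \sum_i \sum_j ((U i == V j) && (U i == X))%:R.

(* With rho X = #{i | U i = X} and beta X = #{j | V j = X}, the number of coincidences is
   sum_X rho X * beta X and coinc X = rho X * beta X; then apply the cubic bound. *)
Lemma coincidence_bound :
  3 * n%:R * (\sum_i \sum_j (U i == V j)%:R)
  <= n%:R ^+ 3 + \sum_i coinc (U i) + \sum_j coinc (V j).
Proof.
pose rho X : R := \sum_i (U i == X)%:R.
pose beta X : R := \sum_j (V j == X)%:R.
have fibre (W : 'I_n -> T) (G : T -> R) : \sum_i G (W i) = \sum_X (\sum_i (W i == X)%:R) * G X.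
  under [RHS]eq_bigr do rewrite mulr_suml.
  by rewrite exchange_big /=; apply: eq_bigr => i _; rewrite sum_indicator_mull.
have coincE X : coinc X = rho X * beta X.
  rewrite /coinc /rho /beta mulr_suml; apply: eq_bigr => i _.
  rewrite mulr_sumr; apply: eq_bigr => j _.
  case: (U i =P X) => [->|UX]; case: (V j =P X) => [->|VX] /=;
    rewrite ?eqxx ?mul1r ?mul0r ?mulr0 ?andbF ?andbT //.
  by case: eqP => // e; rewrite e in VX.
have total : \sum_i \sum_j (U i == V j)%:R = \sum_X rho X * beta X.
  under [RHS]eq_bigr do rewrite -coincE.
  rewrite /coinc [RHS]exchange_big /=; apply: eq_bigr => i _.
  rewrite [RHS]exchange_big /=; apply: eq_bigr => j _.
  rewrite (bigD1 (U i)) //= eqxx andbT big1 ?addr0 // => X /negbTE.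
  by rewrite eq_sym => ->; rewrite andbF.
have mass (W : 'I_n -> T) : \sum_X \sum_i (W i == X)%:R = n%:R :> R.
  have := fibre W (fun _ => 1); rewrite sumr_const card_ord => ->.
  by apply: eq_bigr => X _; rewrite mulr1.
have := sum_mul_3sub_le_cube (fun X => sumr_ge0 _ (fun i _ => ler0n _ _))
  (fun X => sumr_ge0 _ (fun i _ => ler0n _ _)) (mass U) (mass V).
rewrite -/rho -/beta total (fibre U coinc) (fibre V coinc).
have -> : \sum_X rho X * beta X * (3 * n%:R - rho X - beta X)
   = 3 * n%:R * \sum_X rho X * beta X - \sum_X rho X * coinc X - \sum_X beta X * coinc X.
  by rewrite mulr_sumr -!sumrB; apply: eq_bigr => X _; rewrite coincE; ring.
lra.
Qed.

Lemma coinc_ge0 X : 0 <= coinc X.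
Proof. by apply: sumr_ge0 => i _; apply: sumr_ge0 => j _; apply: ler0n. Qed.

Lemma coinc_le_sq X : coinc X <= n%:R ^+ 2.
Proof.
have -> : n%:R ^+ 2 = \sum_(i < n) \sum_(j < n) 1 :> R.
  by rewrite !sumr_const !card_ord -mulrnA -natrX expnS expn1.
by apply: ler_sum => i _; apply: ler_sum => j _; case: (_ && _).
Qed.

Lemma coinc_le_fibreU X : coinc X <= n%:R * \sum_i (U i == X)%:R.
Proof.
rewrite mulr_sumr; apply: ler_sum => i _.
rewrite mulr_natl -[n in _ *+ n]card_ord -sumr_const; apply: ler_sum => j _.
by case: (U i == X); case: (U i == V j).
Qed.

Lemma coinc_le_fibreV X : coinc X <= n%:R * \sum_j (V j == X)%:R.
Proof.
rewrite /coinc exchange_big /= mulr_sumr; apply: ler_sum => j _.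
rewrite mulr_natl -[n in _ *+ n]card_ord -sumr_const; apply: ler_sum => i _.
case: (V j =P X) => [->|VX] /=; first by case: (_ && _).
by case: (U i =P V j) => [UV|] //=; case: (U i =P X) => [UX|] //=; rewrite -UV -UX in VX.
Qed.

End Coincidences.

(* Abstract form of the loss along the edges leaving [K_t]: [e i] is the outer neighbour
   of the [i]-th vertex of [K_t], [d] the degrees and [lab] the blocks of the outer
   vertices, and [N] stands for [coinc]. *)
Lemma outer_gain_ge (R : realFieldType) (n : nat) (O X : finType) (out : pred O)
    (L : 'I_n -> X) (lab : O -> X) (N : X -> R) (e : 'I_n -> O -> R) (d : O -> R) (M c : R) :
  (forall x, 0 <= N x) -> (forall x, N x <= n%:R ^+ 2) ->
  (forall x, N x <= n%:R * \sum_i (L i == x)%:R) ->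
  (forall i o, 0 <= e i o) -> (forall i, \sum_(o | out o) e i o = 1) ->
  (forall o, 0 <= d o) -> 0 <= M -> 0 <= c ->
  - (M * \sum_i (n%:R ^+ 2 - N (L i)))
  <= \sum_i \sum_(o | out o) (N (lab o) - n%:R ^+ 2 * (L i == lab o)%:R) * (M * e i o - c * d o).
Proof.
move=> N0 N1 Nfib e0 e1 d0 M0 c0.
set G := fun i o => N (lab o) - n%:R ^+ 2 * (L i == lab o)%:R.
have edges i : - (M * (n%:R ^+ 2 - N (L i))) <= \sum_(o | out o) G i o * (M * e i o).
  have -> : - (M * (n%:R ^+ 2 - N (L i)))
            = \sum_(o | out o) - (M * (n%:R ^+ 2 - N (L i))) * e i o.
    by rewrite -mulr_sumr e1 mulr1.
  apply: ler_sum => o _.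
  have := N0 (lab o); have := N1 (L i); have : 0 <= M * e i o by apply: mulr_ge0.
  rewrite /G; case: (L i =P lab o) => [<-|_] /= Me NL Nl.
    by rewrite mulr1 [X in _ <= X](_ : _ = - (M * (n%:R ^+ 2 - N (L i))) * e i o) //; ring.
  rewrite mulr0 subr0.
  have : 0 <= (n%:R ^+ 2 - N (L i)) * (M * e i o) by apply: mulr_ge0; lra.
  have : 0 <= N (lab o) * (M * e i o) by apply: mulr_ge0.
  lra.
have degrees : \sum_i \sum_(o | out o) G i o * (c * d o) <= 0.
  rewrite exchange_big /=; apply: sumr_le0 => o _; rewrite -mulr_suml.
  apply: mulr_le0_ge0; last exact: mulr_ge0.
  rewrite sumrB sumr_const card_ord -mulr_sumr -mulr_natr expr2 -mulrA.
  have := Nfib (lab o); have := ler0n R n; set s := \sum_i _ => n0 Ns.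
  have : 0 <= n%:R * (n%:R * s - N (lab o)) by apply: mulr_ge0 => //; lra.
  nra.
have -> : \sum_i \sum_(o | out o) G i o * (M * e i o - c * d o)
   = \sum_i \sum_(o | out o) G i o * (M * e i o) - \sum_i \sum_(o | out o) G i o * (c * d o).
  by rewrite -sumrB; apply: eq_bigr => i _; rewrite -sumrB; apply: eq_bigr => o _; rewrite mulrBr.
have : \sum_i - (M * (n%:R ^+ 2 - N (L i))) <= \sum_i \sum_(o | out o) G i o * (M * e i o).
  by apply: ler_sum => i _; apply: edges.
rewrite sumrN -mulr_sumr; lra.
Qed.

Section Modularity.
Variables (k : nat) (w : 'I_(3 * k) -> nat) (f g : 'I_k -> 'I_(tot w) -> 'I_(3 * k)).
Local Notation m := (nedges f g).

(* [m^2] times Barber's modularity matrix. *)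
Definition modmx (r : redV w) (b : blueV w) : rat :=
  (m * gedge f g r b)%:R - (deg_red f g r * deg_blue f g b)%:R.

Lemma Qb_blockE (C : {set vertex w}) : (0 < m)%N ->
  (edges_in f g C)%:R / m%:R - (red_deg_sum f g C * blue_deg_sum f g C)%:R / (m ^ 2)%:R
  = (m ^ 2)%:R^-1 * \sum_r \sum_b ((inl r \in C) && (inr b \in C))%:R * modmx r b.
Proof.
move=> m0.
have -> : \sum_r \sum_b ((inl r \in C) && (inr b \in C))%:R * modmx r b
   = m%:R * (edges_in f g C)%:R - (red_deg_sum f g C)%:R * (blue_deg_sum f g C)%:R.
  rewrite /modmx; move: (nedges f g) => M.
  rewrite /edges_in /red_deg_sum /blue_deg_sum !natr_sum mulr_sumr.
  rewrite [X in _ * X]big_mkcond /= mulr_suml [X in _ - X]big_mkcond /= -sumrB.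
  apply: eq_bigr => r _; rewrite natr_sum.
  case: (inl r \in C) => /=.
    rewrite !mulr_sumr -sumrB; apply: eq_bigr => b _.
    by case: (inr b \in C); rewrite /= ?mul0r ?mulr0 ?subr0 // ?mul1r ?natrM; ring.
  by rewrite subr0 big1 ?mulr0 ?big1 ?mulr0 // => b _; rewrite mul0r.
have mne : (m%:R : rat) != 0 by rewrite pnatr_eq0 -lt0n.
by rewrite natrX; field.
Qed.

Lemma QbE (P : {set {set vertex w}}) : partition P setT -> (0 < m)%N ->
  Qb f g P = (m ^ 2)%:R^-1 *
    \sum_r \sum_b (pblock P (inl r) == pblock P (inr b))%:R * modmx r b.
Proof.
move=> pP m0; rewrite /Qb (eq_bigr _ (fun C _ => Qb_blockE C m0)) -mulr_sumr.
congr (_ * _); rewrite exchange_big /=; apply: eq_bigr => r _.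
by rewrite exchange_big /=; apply: eq_bigr => b _; rewrite -mulr_suml sum_mem2_partition.
Qed.

End Modularity.

Definition in_layer (k n : nat) (A B : Type) (t : 'I_k) (x : ('I_k * 'I_n + A) + B) : bool :=
  if x is inl (inl (t', _)) then t' == t else false.

Lemma big_layer (R : nmodType) (k n : nat) (A B : finType) (t : 'I_k)
    (F : ('I_k * 'I_n + A) + B -> R) :
  \sum_x F x = \sum_j F (inl (inl (t, j))) + \sum_(x | ~~ in_layer t x) F x.
Proof.
rewrite (bigID (in_layer t)) /=; congr (_ + _).
rewrite big_mkcond !big_sumType /= !big1_eq !addr0 big_pairE (bigD1 t) //= eqxx.
by rewrite [X in _ + X]big1 ?addr0 // => t' /negbTE tt; apply: big1 => j _; rewrite tt.
Qed.

Section Biclique.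
Variables (k : nat) (w : 'I_(3 * k) -> nat) (f g : 'I_k -> 'I_(tot w) -> 'I_(3 * k)).
Variables (t : 'I_k) (P : {set {set vertex w}}).
Hypothesis pP : partition P setT.

Local Notation a := (tot w).
Local Notation m := (nedges f g).
Local Notation K := (biclique w t).

Definition rK (j : 'I_a) : redV w := inl (inl (t, j)).
Definition bK (j : 'I_a) : blueV w := inl (inl (t, j)).

Lemma mem_rK j : inl (rK j) \in K. Proof. by rewrite inE /= eqxx. Qed.
Lemma mem_bK j : inr (bK j) \in K. Proof. by rewrite inE /= eqxx. Qed.

Lemma mem_biclique_red r : (inl r \in K) = in_layer t r.
Proof. by rewrite inE; case: r => [[[]|]|]. Qed.

Lemma mem_biclique_blue b : (inr b \in K) = in_layer t b.
Proof. by rewrite inE; case: b => [[[]|]|]. Qed.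

Lemma sum_red_split (F : redV w -> rat) :
  \sum_r F r = \sum_j F (rK j) + \sum_(r | inl r \notin K) F r.
Proof. by rewrite (big_layer t); congr (_ + _); apply: eq_bigl => x; rewrite mem_biclique_red. Qed.

Lemma sum_blue_split (F : blueV w -> rat) :
  \sum_b F b = \sum_j F (bK j) + \sum_(b | inr b \notin K) F b.
Proof. by rewrite (big_layer t); congr (_ + _); apply: eq_bigl => x; rewrite mem_biclique_blue. Qed.

Lemma outer_edges_red i : \sum_(b | inr b \notin K) (gedge f g (rK i) b)%:R = 1 :> rat.
Proof.
have := congr1 (fun n : nat => n%:R : rat) (deg_red_biclique f g t i).
rewrite deg_redE natr_sum sum_blue_split -natr1 (eq_bigr (fun _ => 1)) => [|j _].
  by rewrite sumr_const card_ord => /addrI.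
by rewrite /= eqxx.
Qed.

Lemma outer_edges_blue j : \sum_(r | inl r \notin K) (gedge f g r (bK j))%:R = 1 :> rat.
Proof.
have := congr1 (fun n : nat => n%:R : rat) (deg_blue_biclique f g t j).
rewrite /deg_blue card_set_sum natr_sum sum_red_split -natr1 (eq_bigr (fun _ => 1)) => [|i _].
  by rewrite sumr_const card_ord => /addrI.
by rewrite /= eqxx.
Qed.

Definition U (i : 'I_a) := pblock P (inl (rK i)).
Definition V (j : 'I_a) := pblock P (inr (bK j)).
Local Notation N := (coinc rat U V).

Definition relabel (i j : 'I_a) (v : vertex w) : option {set vertex w} :=
  if v \in K then (if U i == V j then Some (U i) else None) else Some (pblock P v).
Definition moved (i j : 'I_a) := preim_partition (relabel i j) setT.

Definition gain (r : redV w) (b : blueV w) : rat :=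
  \sum_i \sum_j ((relabel i j (inl r) == relabel i j (inr b))%:R
                 - (pblock P (inl r) == pblock P (inr b))%:R).

Definition mismatches : rat := \sum_i \sum_j (1 - (U i == V j)%:R).

Lemma sum_Qb_moved : (0 < m)%N ->
  \sum_i \sum_j (Qb f g (moved i j) - Qb f g P)
  = (m ^ 2)%:R^-1 * \sum_r \sum_b gain r b * modmx f g r b.
Proof.
move=> m0.
have Qmoved i j : Qb f g (moved i j) = (m ^ 2)%:R^-1 *
    \sum_r \sum_b (relabel i j (inl r) == relabel i j (inr b))%:R * modmx f g r b.
  by rewrite QbE ?preim_partitionP //; under eq_bigr do under eq_bigr do
    rewrite pblock_preim_partition.
rewrite (eq_bigr (fun i => \sum_j (m ^ 2)%:R^-1 * \sum_r \sum_b
    (((relabel i j (inl r) == relabel i j (inr b))%:R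
      - (pblock P (inl r) == pblock P (inr b))%:R) * modmx f g r b))); last first.
  move=> i _; apply: eq_bigr => j _; rewrite Qmoved (QbE pP m0) -mulrBr; congr (_ * _).
  rewrite -sumrB; apply: eq_bigr => r _; rewrite -sumrB; apply: eq_bigr => b _.
  by rewrite mulrBl.
under eq_bigr do rewrite -mulr_sumr.
rewrite -mulr_sumr; congr (_ * _).
under eq_bigr do rewrite exchange_big /=.
rewrite exchange_big /=; apply: eq_bigr => r _.
under eq_bigr do rewrite exchange_big /=.
rewrite exchange_big /=; apply: eq_bigr => b _.
by rewrite /gain mulr_suml; apply: eq_bigr => i _; rewrite mulr_suml.
Qed.

Lemma sum_const_sq (c : rat) : \sum_(i < a) \sum_(j < a) c = a%:R ^+ 2 * c.
Proof. by rewrite !sumr_const !card_ord -mulrnA -natrX mulr_natl expnS expn1. Qed.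

Lemma gain_biclique i' j' : gain (rK i') (bK j') = a%:R ^+ 2 * (1 - (U i' == V j')%:R).
Proof.
rewrite /gain -sum_const_sq; apply: eq_bigr => i _; apply: eq_bigr => j _.
by rewrite /relabel mem_rK mem_bK eqxx.
Qed.

Lemma gain_red_biclique i' b : inr b \notin K ->
  gain (rK i') b = N (pblock P (inr b)) - a%:R ^+ 2 * (U i' == pblock P (inr b))%:R.
Proof.
move=> bK'; rewrite /gain -sum_const_sq /coinc -!sumrB; apply: eq_bigr => i _.
rewrite -sumrB; apply: eq_bigr => j _.
by rewrite /relabel mem_rK (negbTE bK'); case: (U i == V j).
Qed.

Lemma gain_blue_biclique r j' : inl r \notin K ->
  gain r (bK j') = N (pblock P (inl r)) - a%:R ^+ 2 * (V j' == pblock P (inl r))%:R.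
Proof.
move=> rK'; rewrite /gain -sum_const_sq /coinc -!sumrB; apply: eq_bigr => i _.
rewrite -sumrB; apply: eq_bigr => j _.
rewrite /relabel mem_bK (negbTE rK') -/(V j') [V j' == _]eq_sym.
by case: (U i == V j); rewrite //= eq_sym.
Qed.

Lemma gain_outside r b : inl r \notin K -> inr b \notin K -> gain r b = 0.
Proof.
move=> rK' bK'; rewrite /gain big1 // => i _; rewrite big1 // => j _.
by rewrite /relabel (negbTE rK') (negbTE bK') subrr.
Qed.

Lemma sum_gain_red_outer :
  - (m%:R * \sum_i (a%:R ^+ 2 - N (U i)))
  <= \sum_i \sum_(b | inr b \notin K) gain (rK i) b * modmx f g (rK i) b.
Proof.
have -> : \sum_i \sum_(b | inr b \notin K) gain (rK i) b * modmx f g (rK i) b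
  = \sum_i \sum_(b | inr b \notin K)
      (N (pblock P (inr b)) - a%:R ^+ 2 * (U i == pblock P (inr b))%:R)
      * (m%:R * (gedge f g (rK i) b)%:R - a.+1%:R * (deg_blue f g b)%:R).
  apply: eq_bigr => i _; apply: eq_bigr => b bK'.
  by rewrite gain_red_biclique // /modmx deg_red_biclique !natrM.
apply: outer_gain_ge; do ?[exact: ler0n | by move=> *; apply: ler0n].
- exact: coinc_ge0.
- exact: coinc_le_sq.
- exact: coinc_le_fibreU.
- exact: outer_edges_red.
Qed.

Lemma sum_gain_blue_outer :
  - (m%:R * \sum_j (a%:R ^+ 2 - N (V j)))
  <= \sum_(r | inl r \notin K) \sum_j gain r (bK j) * modmx f g r (bK j).
Proof.
rewrite exchange_big /=.
have -> : \sum_j \sum_(r | inl r \notin K) gain r (bK j) * modmx f g r (bK j)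
  = \sum_j \sum_(r | inl r \notin K)
      (N (pblock P (inl r)) - a%:R ^+ 2 * (V j == pblock P (inl r))%:R)
      * (m%:R * (gedge f g r (bK j))%:R - a.+1%:R * (deg_red f g r)%:R).
  apply: eq_bigr => j _; apply: eq_bigr => r rK'.
  by rewrite gain_blue_biclique // /modmx deg_blue_biclique !natrM [_ * a.+1%:R]mulrC.
apply: outer_gain_ge; do ?[exact: ler0n | by move=> *; apply: ler0n].
- exact: coinc_ge0.
- exact: coinc_le_sq.
- exact: coinc_le_fibreV.
- exact: outer_edges_blue.
Qed.

Lemma sum_gain_ge :
  a%:R ^+ 2 * (m%:R - (a.+1 ^ 2)%:R) * mismatches
  - m%:R * \sum_i (a%:R ^+ 2 - N (U i)) - m%:R * \sum_j (a%:R ^+ 2 - N (V j))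
  <= \sum_r \sum_b gain r b * modmx f g r b.
Proof.
rewrite sum_red_split; under [X in _ <= X + _]eq_bigr do rewrite sum_blue_split.
rewrite [X in _ <= X + _]big_split /=.
have -> : \sum_(r | inl r \notin K) \sum_b gain r b * modmx f g r b
        = \sum_(r | inl r \notin K) \sum_j gain r (bK j) * modmx f g r (bK j).
  apply: eq_bigr => r rK'; rewrite sum_blue_split [X in _ + X]big1 ?addr0 // => b bK'.
  by rewrite gain_outside // mul0r.
have -> : \sum_i \sum_j gain (rK i) (bK j) * modmx f g (rK i) (bK j)
        = a%:R ^+ 2 * (m%:R - (a.+1 ^ 2)%:R) * mismatches.
  rewrite /mismatches mulr_sumr; apply: eq_bigr => i _.
  rewrite mulr_sumr; apply: eq_bigr => j _.
  rewrite gain_biclique /modmx deg_red_biclique deg_blue_biclique /= eqxx muln1.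
  by rewrite expnS expn1; ring.
have := sum_gain_red_outer; have := sum_gain_blue_outer; lra.
Qed.

Lemma sum_gain_gt0 : (3 <= a)%N -> (a * a.+1 ^ 2 < (a - 3) * m)%N -> 1 <= mismatches ->
  0 < \sum_r \sum_b gain r b * modmx f g r b.
Proof.
move=> a3 large E1.
have cb := coincidence_bound rat U V.
have matches : \sum_i \sum_j (U i == V j)%:R = a%:R ^+ 2 - mismatches :> rat.
  rewrite /mismatches -[a%:R ^+ 2]mulr1 -sum_const_sq -!sumrB; apply: eq_bigr => i _.
  by rewrite -sumrB; apply: eq_bigr => j _; rewrite opprB addrC subrK.
have LB := sum_gain_ge.
rewrite !sumrB !sumr_const !card_ord -[a%:R ^+ 2 *+ a]mulr_natl in LB.
have hsq : (a.+1 ^ 2)%:R = (a%:R + 1) ^+ 2 :> rat by rewrite natrX natr1.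
have largeR : a%:R * (a.+1 ^ 2)%:R < (a - 3)%:R * m%:R :> rat by rewrite -!natrM ltr_nat.
rewrite natrB // hsq in largeR; rewrite hsq in LB; rewrite matches in cb.
have A3 : 3 <= a%:R :> rat by rewrite ler_nat.
have M0 : 0 <= m%:R :> rat by apply: ler0n.
set A := a%:R in LB cb largeR A3.
set M := m%:R in LB largeR M0.
set E := mismatches in LB cb E1.
set SU := \sum_i N (U i) in LB cb.
set SV := \sum_j N (V j) in LB cb.
have c1 : M * (3 * A * (A ^+ 2 - E)) <= M * (A ^+ 3 + SU + SV) by apply: ler_wpM2l.
have c2 : 0 < A * E * ((A - 3) * M - A * (A + 1) ^+ 2).
  by apply: mulr_gt0; [apply: mulr_gt0; lra | lra].
clear -LB c1 c2.
nra.
Qed.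

Lemma mismatches_ge1 i0 j0 : U i0 != V j0 -> 1 <= mismatches.
Proof.
move=> UV; rewrite /mismatches (bigD1 i0) //= (bigD1 j0) //= (negbTE UV) subr0.
have le01 (c : bool) : 0 <= 1 - c%:R :> rat by case: c; rewrite ?subrr ?subr0.
have : 0 <= \sum_(j | j != j0) (1 - (U i0 == V j)%:R) :> rat by apply: sumr_ge0 => j _.
have : 0 <= \sum_(i | i != i0) \sum_j (1 - (U i == V j)%:R) :> rat.
  by apply: sumr_ge0 => i _; apply: sumr_ge0 => j _.
lra.
Qed.

Lemma biclique_in_block : (0 < a)%N -> (forall i j, U i = V j) ->
  exists2 C, C \in P & K \subset C.
Proof.
move=> a0 UV; pose z : 'I_a := Ordinal a0.
have cov : cover P = setT by case/and3P: pP => /eqP.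
exists (U z); first by rewrite pblock_mem ?cov ?inE.
apply/subsetP => v; rewrite inE.
case: v => [[[[t' j]|i]|i]|[[[t' j]|i]|i]] //= /eqP tt; subst t'.
  by rewrite (UV z z) -(UV j z) /U mem_pblock cov inE.
by rewrite (UV z j) /V mem_pblock cov inE.
Qed.

Lemma sum_gain_le0 : (0 < m)%N ->
  (forall P', partition P' setT -> Qb f g P' <= Qb f g P) ->
  \sum_r \sum_b gain r b * modmx f g r b <= 0.
Proof.
move=> m0 opt.
have : \sum_i \sum_j (Qb f g (moved i j) - Qb f g P) <= 0.
  by apply: sumr_le0 => i _; apply: sumr_le0 => j _; rewrite subr_le0 opt ?preim_partitionP.
by rewrite sum_Qb_moved // pmulr_rle0 // invr_gt0 ltr0n expn_gt0 m0.
Qed.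

End Biclique.

Local Close Scope ring_scope.

Theorem lemma1 (k : nat) (w : 'I_(3 * k) -> nat)
    (f g : 'I_k -> 'I_(tot w) -> 'I_(3 * k)) (P : {set {set vertex w}}) :
  three_partition w ->
  7 %| (tot w) ^ 2 ->
  valid_assign f -> valid_assign g ->
  partition P [set: vertex w] ->
  (forall P' : {set {set vertex w}}, partition P' [set: vertex w] ->
     (Qb f g P' <= Qb f g P)%R) ->
  forall t : 'I_k, exists2 C, C \in P & biclique w t \subset C.
Proof.
move=> tp d7 vf _ pP opt t.
have k0 : 0 < k := leq_ltn_trans (leq0n t) (ltn_ord t).
have a7 := tot_ge7 tp k0 d7.
have large := nedges_large g vf k0 a7 d7.
have m0 : 0 < nedges f g by move: large; case: (nedges f g); rewrite ?muln0.
case: (boolP [forall i, forall j, U t P i == V t P j]) => [/forallP UV | ].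
  apply: biclique_in_block => // [|i j]; first exact: leq_trans a7.
  by apply/eqP; move/forallP: (UV i).
rewrite negb_forall => /existsP [i0]; rewrite negb_forall => /existsP [j0 UV].
have := sum_gain_gt0 (leq_trans (isT : 3 <= 7) a7) large (mismatches_ge1 UV).
by move/lt_geF; rewrite (sum_gain_le0 t pP m0 opt).
Qed.
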